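(* The real form $$O_{(4,1)}(x,y,z,w)=x^4z^2w^2+y^4x^2w^2+z^4x^2y^2+w^4y^2z^2-4x^2y^2z^2w^2$$ is an extremal element of $\mathcal P_{4,8}$.
   Context: $\mathcal P_{n,m}$ denotes the convex cone of all positive semidefinite real forms (homogeneous polynomials nonnegative on $\mathbb R^n$) in $n$ variables of degree $m$. A form $F\in\mathcal P_{n,m}$ is extremal if $F=F_1+F_2$ with $F_1,F_2\in\mathcal P_{n,m}$ implies $F_i=\lambda_iF$ for some nonnegative reals $\lambda_i$. *)

From HB Require Import structures.
From mathcomp Require Import all_boot all_order all_algebra.
From mathcomp Require Import reals.
From mathcomp Require Import mpoly.
Set Implicit Arguments. Unset Strict Implicit. Unset Printing Implicit Defensive.
Import Order.TTheory GRing.Theory Num.Theory.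
Local Open Scope ring_scope.

Definition psd_form (R : realType) (n m : nat) (F : {mpoly R[n]}) : Prop :=
  F \is m.-homog /\ forall x : 'I_n -> R, 0 <= F.@[x].

Definition extremal_psd (R : realType) (n m : nat) (F : {mpoly R[n]}) : Prop :=
  psd_form m F /\
  forall F1 F2 : {mpoly R[n]}, psd_form m F1 -> psd_form m F2 -> F = F1 + F2 ->
    exists l1 l2 : R, [/\ 0 <= l1, 0 <= l2, F1 = l1 *: F & F2 = l2 *: F].

Definition O41 (R : realType) : {mpoly R[4]} :=
  let x := 'X_(inord 0) in let y := 'X_(inord 1) in
  let z := 'X_(inord 2) in let w := 'X_(inord 3) in
  x^+4 * z^+2 * w^+2 + y^+4 * x^+2 * w^+2 + z^+4 * x^+2 * y^+2
  + w^+4 * y^+2 * z^+2 - 4%:R * (x^+2 * y^+2 * z^+2 * w^+2).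

From HB Require Import structures.
From mathcomp Require Import all_boot all_order all_algebra.
From mathcomp Require Import reals.
From mathcomp Require Import mpoly.
From mathcomp Require Import polyrcf.
From mathcomp Require Import ring lra.
Set Implicit Arguments. Unset Strict Implicit. Unset Printing Implicit Defensive.
Import Order.TTheory GRing.Theory Num.Theory.

(* If [0 <= G <= O41], the coefficients of [G] vanish outside the Newton
   polytope of [O41]: for each exponent [e] outside it some weight vector [k]
   makes [e] the unique monomial of [G] lighter than every monomial of [O41],
   and substituting [x_j = t ^ k_j] with [t -> 0+] kills its coefficient.
   Next, [G] and its gradient vanish at the sign vectors [(+-1, +-1, +-1, +-1)],
   which are zeros of [O41]; on the 15 lattice points of the polytope these
   linear conditions cut out the line spanned by the coefficients of [O41].
   Both summands of [O41 = F1 + F2] are therefore multiples of [O41]. *)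

Section NonnegativePolynomials.
Variable R : rcfType.
Local Open Scope ring_scope.
Implicit Types p q : {poly R}.

Lemma horner0_ge0 p : (forall t, 0 < t -> 0 <= p.[t]) -> 0 <= p.[0].
Proof.
move=> p_ge0; rewrite leNgt; apply/negP => p0_lt0.
have e_gt0 : 0 < - p.[0] / 2 by rewrite divr_gt0 // oppr_gt0.
have [d d_gt0 near0] := poly_cont 0 p e_gt0.
have d2_gt0 : 0 < d / 2 by rewrite divr_gt0.
have : `|p.[d / 2] - p.[0]| < - p.[0] / 2.
  by apply: near0; rewrite subr0 gtr0_norm // ltr_pdivrMr // ltr_pMr // ltr1n.
have := p_ge0 _ d2_gt0; rewrite ltr_norml => ? /andP[? ?]; lra.
Qed.

Lemma horner0_ge0_neg p : (forall t, t < 0 -> 0 <= p.[t]) -> 0 <= p.[0].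
Proof.
move=> p_ge0; suff : 0 <= (p \Po - 'X).[0] by rewrite horner_comp hornerN hornerX oppr0.
by apply: horner0_ge0 => t t_gt0; rewrite horner_comp hornerN hornerX p_ge0 // oppr_lt0.
Qed.

Lemma drop_poly_mulXn p i : (forall j, (j < i)%N -> p`_j = 0) ->
  p = drop_poly i p * 'X^i.
Proof.
move=> low0; rewrite -{1}(poly_take_drop i p).
suff -> : take_poly i p = 0 by rewrite add0r.
by apply/polyP => j; rewrite coef_take_poly coef0; case: ifP => // /low0.
Qed.

(* Induction on [i]: once the coefficients below [i] vanish, dividing by ['X^i]
   and letting [t] tend to [0] compares the [i]-th coefficients. *)
Lemma dominated_coef_eq0 p q j :
  (forall t, 0 < t -> 0 <= p.[t] <= q.[t]) -> (forall i, (i < j)%N -> q`_i = 0) ->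
  forall i, (i < j)%N -> p`_i = 0.
Proof.
move=> pq q_low i; elim/ltn_ind: i => i IH lt_ij.
have lt_j k : (k < i)%N -> (k < j)%N by move=> lt_ki; apply: ltn_trans lt_ij.
have Ep := @drop_poly_mulXn p i (fun k lt_ki => IH k lt_ki (lt_j k lt_ki)).
have Eq := @drop_poly_mulXn q i (fun k lt_ki => q_low k (lt_j k lt_ki)).
set p' := drop_poly i p in Ep; set q' := drop_poly i q in Eq.
have p'q' t : 0 < t -> 0 <= p'.[t] /\ 0 <= (q' - p').[t].
  move=> t_gt0; have ti_gt0 : 0 < t ^+ i by rewrite exprn_gt0.
  have := pq t t_gt0; rewrite {1 2}Ep {1}Eq !hornerE pmulr_lge0 // ler_pM2r //.
  by case/andP; split; rewrite // subr_ge0.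
have := @horner0_ge0 p' (fun t t_gt0 => (p'q' t t_gt0).1).
have := @horner0_ge0 (q' - p') (fun t t_gt0 => (p'q' t t_gt0).2).
by rewrite !hornerE !horner_coef0 !coef_drop_poly add0n q_low //; lra.
Qed.

Lemma nonneg_root0_coef1 q : (forall t, 0 <= q.[t]) -> q.[0] = 0 -> q`_1 = 0.
Proof.
move=> q_ge0 q0; have Eq : q = drop_poly 1 q * 'X^1.
  by apply: drop_poly_mulXn => -[|//] _; rewrite -horner_coef0.
have <- : (drop_poly 1 q).[0] = q`_1 by rewrite horner_coef0 coef_drop_poly.
apply/eqP; rewrite eq_le; apply/andP; split; last first.
  by apply: horner0_ge0 => t t_gt0; move: (q_ge0 t); rewrite {1}Eq hornerE hornerX pmulr_lge0.
rewrite -oppr_ge0 -hornerN; apply: horner0_ge0_neg => t t_lt0.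
by move: (q_ge0 t); rewrite {1}Eq hornerE hornerX hornerN nmulr_lge0 // oppr_ge0.
Qed.

Lemma coef1_XaddC_exp (a : R) n : ((a%:P + 'X) ^+ n)`_1 = n%:R * a ^+ n.-1.
Proof.
rewrite -[LHS]mulr1n -coef_deriv -horner_coef0 deriv_exp derivD derivC derivX add0r.
by rewrite mul1r hornerMn horner_exp hornerD hornerC hornerX addr0 mulr_natl.
Qed.
End NonnegativePolynomials.

Fixpoint exps (n d : nat) : seq (seq nat) :=
  if n is n'.+1 then [seq a :: e | a <- iota 0 d.+1, e <- exps n' (d - a)]
  else if d == 0%N then [:: [::]] else [::].

Lemma mem_exps n d e : (e \in exps n d) = (size e == n) && (sumn e == d).
Proof.
elim: n d e => [|n IH] d e; first by case: d; case: e.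
apply/flatten_mapP/idP => [[b] | ].
  rewrite mem_iota add0n ltnS => /andP[_ le_bd] /mapP[f].
  rewrite IH => /andP[size_f /eqP sum_f] ->.
  by rewrite /= eqSS size_f sum_f subnKC ?eqxx.
case: e => [|a e] // /andP[/= size_e /eqP <-].
exists a; first by rewrite -/(iota 0 _.+1) mem_iota ltnS leq_addr.
by apply/mapP; exists e; rewrite // IH -eqSS size_e addKn eqxx.
Qed.

Lemma exps_uniq n d : uniq (exps n d).
Proof.
elim: n d => [|n IH] d; first by case: d.
by apply: allpairs_uniq_dep => [|a _|[a e] [b f] _ _ /= [-> ->]]; rewrite ?iota_uniq ?IH.
Qed.

Section FormsByCoefficients.
Variables (R : rcfType) (n : nat).
Local Open Scope ring_scope.
Implicit Types (s : seq (seq nat)) (c : seq nat -> R) (x : 'I_n -> R) (e k : seq nat) (i : 'I_n).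

Definition monom x e : R := \prod_(j < n) x j ^+ nth 0%N e j.

Definition form_eval s c x : R := \sum_(e <- s) c e * monom x e.

Lemma form_eval_filter s s' c x :
  [seq e <- s | e \in s'] = s' -> {in s, forall e, e \notin s' -> c e = 0} ->
  form_eval s c x = form_eval s' c x.
Proof.
move=> filter_s c0; rewrite /form_eval -[in RHS]filter_s big_filter [RHS]big_mkcond.
by apply: eq_big_seq => e se; case: ifPn => // /(c0 e se) ->; rewrite mul0r.
Qed.

Definition weight k e : nat := sumn [seq nth 0%N k j * nth 0%N e j | j <- iota 0 n].

Lemma monom_pow_weight (t : R) k e : monom (fun j => t ^+ nth 0%N k j) e = t ^+ weight k e.
Proof.
rewrite /monom /weight sumnE big_map -prodrXr -[in RHS](subn0 n) -/(index_iota 0 n).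
by rewrite big_mkord; apply: eq_bigr => j _; rewrite exprM.
Qed.

Definition sign_vec k : 'I_n -> R := fun j => (-1) ^+ nth 0%N k j.

Lemma form_eval_sign_vec s c k :
  form_eval s c (sign_vec k) = \sum_(e <- s) c e * (-1) ^+ weight k e.
Proof. by apply: eq_bigr => e _; rewrite monom_pow_weight. Qed.

Definition weight_poly s c k : {poly R} := \sum_(e <- s) c e *: 'X^(weight k e).

Lemma horner_weight_poly s c k t :
  (weight_poly s c k).[t] = form_eval s c (fun j => t ^+ nth 0%N k j).
Proof.
rewrite /weight_poly horner_sum; apply: eq_bigr => e _.
by rewrite hornerZ hornerXn monom_pow_weight.
Qed.

Lemma coef_weight_poly s c k (i : nat) :
  (weight_poly s c k)`_i = \sum_(e <- s | weight k e == i) c e.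
Proof. by rewrite coef_sumMXn. Qed.

(* Substituting [x_j = t ^ k_j] turns a form into a polynomial in [t]; when [e]
   is alone on its weight and strictly lighter than the support of [c'], the
   coefficient [c e] is the lowest one and must vanish. *)
Lemma dominated_light_coef_eq0 s c c' k e :
  (forall x, 0 <= form_eval s c x <= form_eval s c' x) ->
  [seq f <- s | weight k f == weight k e] = [:: e] ->
  {in s, forall f, c' f != 0 -> (weight k e < weight k f)%N} ->
  c e = 0.
Proof.
move=> cc' e_alone light.
have := @dominated_coef_eq0 _ (weight_poly s c k) (weight_poly s c' k) (weight k e).+1.
move=> /(_ _ _ (weight k e) (ltnSn _)).
rewrite coef_weight_poly -big_filter e_alone big_seq1; apply.
  by move=> t _; rewrite !horner_weight_poly.
move=> i lt_i; rewrite coef_weight_poly big_seq_cond big1 // => f /andP[sf /eqP wf].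
by apply: contraTeq lt_i => /(light f sf); rewrite wf ltnS -ltnNge.
Qed.

Definition shift x i (t : R) : 'I_n -> R :=
  fun j => if j == i then x j + t else x j.

Lemma monom_shift x i t e :
  monom (shift x i t) e = (x i + t) ^+ nth 0%N e i * \prod_(j < n | j != i) x j ^+ nth 0%N e j.
Proof.
rewrite /monom (bigD1 i) //= /shift eqxx; congr (_ * _).
by apply: eq_bigr => j /negbTE ->.
Qed.

Definition line_poly s c x i : {poly R} :=
  \sum_(e <- s) (c e * \prod_(j < n | j != i) x j ^+ nth 0%N e j) *:
    ((x i)%:P + 'X) ^+ nth 0%N e i.

Lemma horner_line_poly s c x i t : (line_poly s c x i).[t] = form_eval s c (shift x i t).
Proof.
rewrite /line_poly horner_sum; apply: eq_bigr => e _.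
by rewrite hornerZ horner_exp hornerD hornerC hornerX monom_shift; ring.
Qed.

(* The linear coefficient is the partial derivative in [x_i]; multiplying by
   [x_i] gives Euler's operator, which is again a form with coefficients. *)
Lemma mul_coef1_line_poly s c x i :
  x i * (line_poly s c x i)`_1 = form_eval s (fun e => (nth 0%N e i)%:R * c e) x.
Proof.
rewrite /line_poly coef_sum mulr_sumr; apply: eq_bigr => e _.
rewrite coefZ coef1_XaddC_exp /monom [in RHS](bigD1 i) //=.
by case: (nth 0%N e i) => [|m]; rewrite ?exprS /=; ring.
Qed.

Lemma nonneg_form_euler_eq0 s c x i :
  (forall y, 0 <= form_eval s c y) -> form_eval s c x = 0 ->
  form_eval s (fun e => (nth 0%N e i)%:R * c e) x = 0.
Proof.
move=> c_ge0 cx0; rewrite -mul_coef1_line_poly nonneg_root0_coef1 ?mulr0 // => [t|].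
  by rewrite horner_line_poly.
rewrite horner_line_poly -[RHS]cx0; apply: eq_bigr => e _.
by rewrite monom_shift addr0 /monom [in RHS](bigD1 i).
Qed.
End FormsByCoefficients.

Section FormsAsMpoly.
Variables (R : rcfType) (n d : nat).
Local Open Scope ring_scope.
Implicit Types (F G : {mpoly R[n]}) (m : 'X_{1..n}).

Definition mnm_of_seq (e : seq nat) : 'X_{1..n} := [multinom nth 0%N e i | i < n].

Lemma mnm_of_seqK m : mnm_of_seq m = m.
Proof. by apply/mnmP => i; rewrite mnmE (mnm_nth 0%N). Qed.

Lemma mnm_mem_exps m : (m : seq nat) \in exps n (mdeg m).
Proof. by rewrite mem_exps size_tuple /mdeg sumnE !eqxx. Qed.

Lemma mnm_of_seq_inj : {in exps n d &, injective mnm_of_seq}.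
Proof.
move=> e f; rewrite !mem_exps => /andP[/eqP size_e _] /andP[/eqP size_f _] Eef.
apply: (@eq_from_nth _ 0%N) => [|j]; first by rewrite size_e size_f.
rewrite size_e => lt_jn; have := congr1 (fun m => m (Ordinal lt_jn)) Eef.
by rewrite !mnmE.
Qed.

Lemma meval_exps F x : F \is d.-homog ->
  F.@[x] = form_eval (exps n d) (fun e => F@_(mnm_of_seq e)) x.
Proof.
move=> F_homog; rewrite mevalE.
have -> : form_eval (exps n d) (fun e => F@_(mnm_of_seq e)) x =
    \sum_(m <- map mnm_of_seq (exps n d)) F@_m * \prod_i x i ^+ m i.
  by rewrite big_map; apply: eq_bigr => e _; congr (_ * _); apply: eq_bigr => i _; rewrite mnmE.
rewrite [RHS](bigID (mem (msupp F))) /= [X in _ = _ + X]big1 => [|m /memN_msupp_eq0 ->].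
  2: by rewrite mul0r.
rewrite addr0 -[RHS]big_filter; apply: perm_big; apply: uniq_perm.
- exact: msupp_uniq.
- by rewrite filter_uniq // map_inj_in_uniq ?exps_uniq //; exact: mnm_of_seq_inj.
move=> m; rewrite mem_filter andb_idr // => m_supp.
by rewrite -[m]mnm_of_seqK map_f // -(dhomog_mf F_homog m_supp) mnm_mem_exps.
Qed.

Lemma homog_exps_coefP F G : F \is d.-homog -> G \is d.-homog ->
  {in exps n d, forall e, F@_(mnm_of_seq e) = G@_(mnm_of_seq e)} -> F = G.
Proof.
move=> F_homog G_homog FG; apply/mpolyP => m; case: (mdeg m =P d) => [md | /eqP ne_md].
  by rewrite -[m]mnm_of_seqK FG // -md mnm_mem_exps.
by rewrite (dhomog_nemf_coeff F_homog ne_md) (dhomog_nemf_coeff G_homog ne_md).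
Qed.
End FormsAsMpoly.

Definition O41_supp : seq (seq nat) :=
  [:: [:: 0; 2; 2; 4]; [:: 2; 2; 2; 2]; [:: 2; 2; 4; 0]; [:: 2; 4; 0; 2]; [:: 4; 0; 2; 2]].

(* The lattice points of the Newton polytope of [O41]. *)
Definition O41_newton : seq (seq nat) :=
  [:: [:: 0; 2; 2; 4]; [:: 1; 2; 2; 3]; [:: 1; 2; 3; 2]; [:: 1; 3; 1; 3]; [:: 2; 1; 2; 3];
      [:: 2; 2; 2; 2]; [:: 2; 2; 3; 1]; [:: 2; 2; 4; 0]; [:: 2; 3; 1; 2]; [:: 2; 3; 2; 1];
      [:: 2; 4; 0; 2]; [:: 3; 1; 2; 2]; [:: 3; 1; 3; 1]; [:: 3; 2; 1; 2]; [:: 4; 0; 2; 2]].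

Definition isolating (k e : seq nat) : bool :=
  ([seq f <- exps 4 8 | weight 4 k f == weight 4 k e] == [:: e]) &&
  all (fun f => weight 4 k e < weight 4 k f) O41_supp.

Definition isolating_weights : seq (seq nat) :=
  [:: [:: 0; 7; 13; 16]; [:: 11; 13; 16; 0]; [:: 16; 13; 0; 9]; [:: 16; 0; 9; 13];
      [:: 0; 12; 2; 13]; [:: 0; 11; 16; 1]; [:: 5; 16; 4; 0]; [:: 15; 0; 7; 13];
      [:: 0; 7; 9; 15]; [:: 8; 13; 0; 6]; [:: 7; 9; 15; 0]; [:: 13; 0; 5; 11];
      [:: 8; 2; 5; 0]; [:: 0; 1; 12; 16]].

Lemma O41_newton_isolated :
  all (fun e => (e \in O41_newton) || has (isolating ^~ e) isolating_weights) (exps 4 8).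
Proof. by vm_compute. Qed.

Lemma filter_O41_newton : [seq e <- exps 4 8 | e \in O41_newton] = O41_newton.
Proof. by vm_compute. Qed.

Lemma filter_O41_supp : [seq e <- exps 4 8 | e \in O41_supp] = O41_supp.
Proof. by vm_compute. Qed.

Lemma O41_supp_newton : {subset O41_supp <= O41_newton}.
Proof. by apply/allP; vm_compute. Qed.

Section O41.
Variable R : realType.
Local Open Scope ring_scope.
Implicit Types (x : 'I_4 -> R) (a b c d : R).

Definition O41_coef e : R := if e == [:: 2; 2; 2; 2]%N then -4 else (e \in O41_supp)%:R.

Lemma O41_coef_supp e : O41_coef e != 0 -> e \in O41_supp.
Proof.
rewrite /O41_coef; case: (e =P _) => [-> | _]; first by rewrite !inE.
by case: (e \in O41_supp); rewrite ?eqxx.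
Qed.

Definition O41_fun (a b c d : R) : R :=
  a^+4 * c^+2 * d^+2 + b^+4 * a^+2 * d^+2 + c^+4 * a^+2 * b^+2 + d^+4 * b^+2 * c^+2
  - 4%:R * (a^+2 * b^+2 * c^+2 * d^+2).

Lemma monom4 x (a b c d : nat) :
  monom x [:: a; b; c; d] =
  x (inord 0) ^+ a * x (inord 1) ^+ b * x (inord 2) ^+ c * x (inord 3) ^+ d.
Proof.
rewrite /monom !big_ord_recr big_ord0 /= mul1r.
by congr (_ * _ * _ * _); congr (x _ ^+ _); apply: val_inj; rewrite /= inordK.
Qed.

Lemma form_eval_O41_coef x :
  form_eval (exps 4 8) O41_coef x = O41_fun (x (inord 0)) (x (inord 1)) (x (inord 2)) (x (inord 3)).
Proof.
rewrite (form_eval_filter _ filter_O41_supp) => [|e _]; last first.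
  by apply: contraNeq => /O41_coef_supp.
by rewrite /form_eval /O41_supp !big_cons big_nil !monom4 /O41_coef /= /O41_fun; ring.
Qed.

Lemma meval_O41 x :
  (O41 R).@[x] = O41_fun (x (inord 0)) (x (inord 1)) (x (inord 2)) (x (inord 3)).
Proof.
by rewrite /O41 /= !(mevalB, mevalD, mevalM, rmorphXn, rmorph_nat, mevalXU) meval1.
Qed.

(* With [A = |a|] and [C = |c|], [O41_fun] is a sum of squares. *)
Lemma O41_fun_ge0 a b c d : 0 <= O41_fun a b c d.
Proof.
have sqr_norm (y : R) k : y ^+ (2 * k) = `|y| ^+ (2 * k).
  by rewrite !exprM real_normK ?num_real.
rewrite /O41_fun -[a ^+ 2]/(a ^+ (2 * 1)) -[a ^+ 4]/(a ^+ (2 * 2)).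
rewrite -[c ^+ 2]/(c ^+ (2 * 1)) -[c ^+ 4]/(c ^+ (2 * 2)) !(sqr_norm a) !(sqr_norm c) /=.
move: (normr_ge0 a) (normr_ge0 c); move: `|a| `|c| => A C A_ge0 C_ge0.
have -> : A ^+ 4 * C ^+ 2 * d ^+ 2 + b ^+ 4 * A ^+ 2 * d ^+ 2 + C ^+ 4 * A ^+ 2 * b ^+ 2 +
    d ^+ 4 * b ^+ 2 * C ^+ 2 - 4%:R * (A ^+ 2 * b ^+ 2 * C ^+ 2 * d ^+ 2) =
  (A * d) ^+ 2 * (A * C - b ^+ 2) ^+ 2 + (b * C) ^+ 2 * (A * C - d ^+ 2) ^+ 2
  + 2%:R * (A * C) * (b * d) ^+ 2 * (A - C) ^+ 2 by ring.
apply: addr_ge0; first by apply: addr_ge0; apply: mulr_ge0; apply: sqr_ge0.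
by apply: mulr_ge0; rewrite ?sqr_ge0 // mulr_ge0 ?sqr_ge0 // mulr_ge0 ?mulr_ge0.
Qed.

Lemma O41_fun_eq0 a b c d :
  a ^+ 2 = 1 -> b ^+ 2 = 1 -> c ^+ 2 = 1 -> d ^+ 2 = 1 -> O41_fun a b c d = 0.
Proof.
have sqrK (y : R) : y ^+ 2 = 1 -> y ^+ 4 = 1.
  by rewrite -[4%N]/(2 * 2)%N exprM => ->; rewrite expr1n.
move=> a2 b2 c2 d2; rewrite /O41_fun !sqrK // a2 b2 c2 d2; ring.
Qed.

Lemma O41_homog : O41 R \is 8.-homog.
Proof.
have X_homog k (i : 'I_4) : ('X_i : {mpoly R[4]}) ^+ k \is (1 * k).-homog.
  by apply: dhomogMn; rewrite dhomogX; apply/eqP; exact: mdeg1.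
have M_homog (i j l : 'I_4) : ('X_i ^+ 4 * 'X_j ^+ 2 * 'X_l ^+ 2 : {mpoly R[4]}) \is 8.-homog.
  exact: dhomogM (dhomogM (X_homog 4%N i) (X_homog 2%N j)) (X_homog 2%N l).
rewrite rpredB ?rpredD // mulr_natl rpredMn //.
exact: dhomogM (dhomogM (dhomogM (X_homog 2%N _) (X_homog 2%N _)) (X_homog 2%N _)) (X_homog 2%N _).
Qed.

Lemma sign_pow (k : nat) : (-1 : R) ^+ k = if odd k then -1 else 1.
Proof. by rewrite -signr_odd; case: (odd k); rewrite ?expr1 ?expr0. Qed.

Local Notation sign4 k := (@sign_vec R 4 k).

(* The 14 instances used below (5 values, 9 Euler derivatives) are already
   linearly independent on the 15 coefficients. *)
Lemma O41_newton_sign_system (c : seq nat -> R) :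
  (forall k, \sum_(e <- O41_newton) c e * (-1) ^+ weight 4 k e = 0) ->
  (forall k (i : 'I_4),
     \sum_(e <- O41_newton) (nth 0%N e i)%:R * c e * (-1) ^+ weight 4 k e = 0) ->
  {in O41_newton, forall e, c e = c [:: 4; 0; 2; 2]%N * O41_coef e}.
Proof.
move=> value euler.
suff all_eq : all (fun e => c e == c [:: 4; 0; 2; 2]%N * O41_coef e) O41_newton.
  by move=> e /(allP all_eq)/eqP.
have := value [:: 0; 0; 0; 0]%N; have := value [:: 0; 0; 0; 1]%N.
have := value [:: 0; 0; 1; 0]%N; have := value [:: 0; 0; 1; 1]%N.
have := value [:: 0; 1; 0; 0]%N.
have := euler [:: 0; 0; 0; 0]%N (@Ordinal 4 0 isT).
have := euler [:: 0; 0; 0; 0]%N (@Ordinal 4 1 isT).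
have := euler [:: 0; 0; 0; 0]%N (@Ordinal 4 2 isT).
have := euler [:: 0; 0; 0; 1]%N (@Ordinal 4 0 isT).
have := euler [:: 0; 0; 0; 1]%N (@Ordinal 4 1 isT).
have := euler [:: 0; 0; 0; 1]%N (@Ordinal 4 2 isT).
have := euler [:: 0; 0; 1; 0]%N (@Ordinal 4 0 isT).
have := euler [:: 0; 0; 1; 0]%N (@Ordinal 4 1 isT).
have := euler [:: 0; 0; 1; 1]%N (@Ordinal 4 0 isT).
rewrite /O41_newton !big_cons !big_nil /= !sign_pow /= /O41_coef /O41_supp /=.
rewrite ?mulr0n ?mulr1n ?mul0r ?mulr0 ?mulr1 ?mul1r ?addr0 => {value euler} *.
by repeat (apply/andP; split); try (apply/eqP; lra).
Qed.

Lemma dominated_by_O41 (c : seq nat -> R) :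
  (forall x, 0 <= form_eval (exps 4 8) c x <= form_eval (exps 4 8) O41_coef x) ->
  {in exps 4 8, forall e, c e = c [:: 4; 0; 2; 2]%N * O41_coef e}.
Proof.
move=> c_le.
have c_out : {in exps 4 8, forall e, e \notin O41_newton -> c e = 0}.
  move=> e Ee e_out; have /allP/(_ e Ee) := O41_newton_isolated.
  rewrite (negbTE e_out) => /hasP[k _ /andP[/eqP e_alone /allP light]].
  by apply: (dominated_light_coef_eq0 c_le e_alone) => f _ /O41_coef_supp /light.
have c_ge0 x : 0 <= form_eval (exps 4 8) c x by case/andP: (c_le x).
have c_sign0 k : form_eval (exps 4 8) c (sign4 k) = 0.
  apply/eqP; rewrite eq_le c_ge0 andbT; have /andP[_] := c_le (sign4 k).
  by rewrite form_eval_O41_coef O41_fun_eq0 // sqrr_sign.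
have newton_sum (c' : seq nat -> R) k :
    {in exps 4 8, forall e, e \notin O41_newton -> c' e = 0} ->
    form_eval (exps 4 8) c' (sign4 k) = \sum_(e <- O41_newton) c' e * (-1) ^+ weight 4 k e.
  by move=> c'_out; rewrite (form_eval_filter _ filter_O41_newton c'_out) form_eval_sign_vec.
move=> e Ee; case: (boolP (e \in O41_newton)) => [|e_out]; last first.
  rewrite c_out // [O41_coef e](_ : _ = 0) ?mulr0 //.
  by move: e_out; apply: contraNeq => /O41_coef_supp /O41_supp_newton.
apply: O41_newton_sign_system => [k | k i]; first by rewrite -newton_sum // c_sign0.
rewrite -(newton_sum (fun e => (nth 0%N e i)%:R * c e)) => [|f Ef f_out]; last first.
  by rewrite c_out ?mulr0.
exact: nonneg_form_euler_eq0 c_ge0 (c_sign0 k).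
Qed.

Lemma O41_ge0 x : 0 <= (O41 R).@[x].
Proof. by rewrite meval_O41 O41_fun_ge0. Qed.

Lemma meval_O41_coef x : (O41 R).@[x] = form_eval (exps 4 8) O41_coef x.
Proof. by rewrite meval_O41 form_eval_O41_coef. Qed.

Definition pt1011 : 'I_4 -> R := fun j => (j != 1%N :> nat)%:R.

Lemma meval_O41_pt1011 : (O41 R).@[pt1011] = 1.
Proof. by rewrite meval_O41 /pt1011 !inordK //= /O41_fun; ring. Qed.

(* [O41 R] is dominated by itself, so its coefficients are proportional to
   [O41_coef]; the factor is read off at [pt1011]. *)
Lemma O41_coef_mnm : {in exps 4 8, forall e, (O41 R)@_(mnm_of_seq 4 e) = O41_coef e}.
Proof.
pose cO e := (O41 R)@_(mnm_of_seq 4 e).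
have form_eval_cO x : form_eval (exps 4 8) cO x = (O41 R).@[x].
  by rewrite -meval_exps // O41_homog.
have cO_le x : 0 <= form_eval (exps 4 8) cO x <= form_eval (exps 4 8) O41_coef x.
  by rewrite form_eval_cO -meval_O41_coef lexx O41_ge0.
have cOE := dominated_by_O41 cO_le.
suff cO1 : cO [:: 4; 0; 2; 2]%N = 1 by move=> e /cOE; rewrite cO1 mul1r.
have : form_eval (exps 4 8) cO pt1011 = cO [:: 4; 0; 2; 2]%N * (O41 R).@[pt1011].
  by rewrite meval_O41_coef mulr_sumr; apply: eq_big_seq => e /cOE ->; rewrite mulrA.
by rewrite form_eval_cO meval_O41_pt1011 mulr1.
Qed.

Lemma O41_summand_proportional G H : psd_form 8 G -> psd_form 8 H -> O41 R = G + H ->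
  exists2 l, 0 <= l & G = l *: O41 R.
Proof.
case=> G_homog G_ge0 [_ H_ge0] O41E; pose c e := G@_(mnm_of_seq 4 e).
have G_le x : G.@[x] <= (O41 R).@[x] by rewrite O41E mevalD lerDl.
have cE : {in exps 4 8, forall e, c e = c [:: 4; 0; 2; 2]%N * O41_coef e}.
  by apply: dominated_by_O41 => x; rewrite -meval_exps // -meval_O41_coef G_ge0 G_le.
have G_eq : G = c [:: 4; 0; 2; 2]%N *: O41 R.
  apply: (@homog_exps_coefP _ _ 8) => //; first exact: dhomogZ O41_homog.
  by move=> e Ee; rewrite mcoeffZ O41_coef_mnm // -cE.
exists (c [:: 4; 0; 2; 2]%N) => //.
by have := G_ge0 pt1011; rewrite G_eq mevalZ meval_O41_pt1011 mulr1.
Qed.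
End O41.

Theorem theorem1 (R : realType) : extremal_psd 8 (O41 R).
Proof.
split=> [|F1 F2 F1_psd F2_psd O41E]; first by split; [exact: O41_homog | exact: O41_ge0].
have [l1 l1_ge0 F1E] := O41_summand_proportional F1_psd F2_psd O41E.
have [l2 l2_ge0 F2E] := O41_summand_proportional F2_psd F1_psd (etrans O41E (addrC F1 F2)).
by exists l1, l2.
Qed.
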